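(* Let $T$ be an interface element, $\mathbf u\in\mathbf{PC}^2_{int}(T)$, $s\in\{+,-\}$ and $s'$ the opposite sign. For every $i\in\mathcal I^{s'}$ and every $X\in T^s_\ast$, $$\mathbf u^{s'}(A_i)=\mathbf u^s(X)+\big((A_i-X)^T\otimes I_2\big)\mathrm{Vec}(\nabla\mathbf u^s(X))+\big((A_i-\widetilde Y_i)^T\otimes I_2\big)\big(M^s(\widetilde Y_i)-I_4\big)\mathrm{Vec}(\nabla\mathbf u^s(X))+\mathbf R^s_i(X),$$ where $\mathbf R^s_i=\mathbf R^s_{i1}+\mathbf R^s_{i2}+\mathbf R^s_{i3}$ with $$\mathbf R^s_{i1}(X)=\int_0^{\tilde t_i}(1-t)\tfrac{d^2}{dt^2}\mathbf u^s(Y_i(t,X))\,dt,\quad \mathbf R^s_{i2}(X)=\int_{\tilde t_i}^1(1-t)\tfrac{d^2}{dt^2}\mathbf u^{s'}(Y_i(t,X))\,dt,$$ $$\mathbf R^s_{i3}(X)=(1-\tilde t_i)\big((A_i-X)^T\otimes I_2\big)\big(M^s(\widetilde Y_i)-I_4\big)\int_0^{\tilde t_i}\tfrac{d}{dt}\mathrm{Vec}(\nabla\mathbf u^s(Y_i(t,X)))\,dt.$$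
   Context: Lamé parameters $\lambda^s,\mu^s>0$ on $\Omega^s$, $s=\pm$; stress $\sigma^s_{ij}(\mathbf u)=\lambda^s(\nabla\cdot\mathbf u)\delta_{ij}+2\mu^s\epsilon_{ij}(\mathbf u)$, $\epsilon_{ij}(\mathbf u)=\frac12(\partial_{x_j}u_i+\partial_{x_i}u_j)$. $\nabla\mathbf u$ is the Jacobian with $i$-th row $\nabla u_i$; $\mathrm{Vec}$ stacks the columns of a matrix into a vector; $\otimes$ is the Kronecker product; $I_n$ the identity. $T$ is a mesh element (triangle or rectangle) whose interior meets the interface $\Gamma$, which meets $\partial T$ at two points $D,E$ on different edges and is $C^2$ in $T$; $T^s=T\cap\Omega^s$. $\mathbf{PC}^2_{int}(T)$: $\mathbf u$ with $\mathbf u^s=\mathbf u|_{T^s}\in[C^2(\overline{T^s})]^2$, $\mathbf u^+=\mathbf u^-$ and $\sigma^+(\mathbf u^+)\mathbf n=\sigma^-(\mathbf u^-)\mathbf n$ on $\Gamma\cap T$. For $\widetilde X\in\Gamma\cap T$ with unit normal $(\tilde n_1,\tilde n_2)$, $N^s(\widetilde X)$ is the $4\times4$ matrix with rows $((\lambda^s+2\mu^s)\tilde n_1,\mu^s\tilde n_2,\mu^s\tilde n_2,\lambda^s\tilde n_1)$, $(\lambda^s\tilde n_2,\mu^s\tilde n_1,\mu^s\tilde n_1,(\lambda^s+2\mu^s)\tilde n_2)$, $(-\tilde n_2,0,\tilde n_1,0)$, $(0,-\tilde n_2,0,\tilde n_1)$, and $M^-=(N^+)^{-1}N^-$, $M^+=(N^-)^{-1}N^+$.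 Nodes $A_i$, $i\in\mathcal I$, are the vertices of $T$ (linear/bilinear case) or the edge midpoints (rotated $Q_1$ case); $\mathcal I^s=\{i:A_i\in T^s\}$. The segment $l=\overline{DE}$ splits $T$ into $\overline T^+,\overline T^-$ (labelled so that $\overline T^s$ is the part approximating $T^s$). $T_{int}$ is the union of $l_t\cap T$ over all tangent lines $l_t$ to $\Gamma\cap T$, and $T^s_\ast=\overline T^s\cap(T^s\setminus T_{int})$. $Y_i(t,X)=tA_i+(1-t)X$. For $X\in T^s_\ast$ and $i\in\mathcal I^{s'}$ the segment from $X$ to $A_i$ meets $\Gamma\cap T$ at exactly one point $\widetilde Y_i=Y_i(\tilde t_i,X)$, $\tilde t_i\in[0,1]$. *)

From Stdlib Require Import Reals List ClassicalEpsilon.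
Open Scope R_scope.

Definition R2 := (R * R)%type.
Definition padd (p q : R2) : R2 := (fst p + fst q, snd p + snd q).
Definition psub (p q : R2) : R2 := (fst p - fst q, snd p - snd q).
Definition pscal (r : R) (p : R2) : R2 := (r * fst p, r * snd p).
Definition coord (p : R2) (j : nat) : R :=
  match j with O => fst p | _ => snd p end.
Definition dist2 (p q : R2) : R :=
  sqrt ((fst p - fst q) ^ 2 + (snd p - snd q) ^ 2).
Definition shift (p : R2) (j : nat) (h : R) : R2 :=
  match j with O => (fst p + h, snd p) | _ => (fst p, snd p + h) end.

Inductive sgn := Plus | Minus.
Definition opp (s : sgn) : sgn := match s with Plus => Minus | Minus => Plus end.

(** * Derivatives and integrals of real functions (classical choice of the
    value; they coincide with the usual ones whenever these exist). *)
Definition Dt (f : R -> R) (t : R) : R :=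
  epsilon (inhabits 0) (fun l => derivable_pt_lim f t l).
Definition Rint (f : R -> R) (a b : R) : R :=
  epsilon (inhabits 0)
    (fun l => exists pr : Riemann_integrable f a b, RiemannInt pr = l).

Definition partial (f : R2 -> R) (j : nat) (p : R2) : R :=
  Dt (fun h => f (shift p j h)) 0.
Definition cont_at (g : R2 -> R) (p : R2) : Prop :=
  forall eps, 0 < eps -> exists delta, 0 < delta /\
    forall q, dist2 q p < delta -> Rabs (g q - g p) < eps.
Definition open_set (U : R2 -> Prop) : Prop :=
  forall p, U p -> exists r, 0 < r /\ forall q, dist2 q p < r -> U q.
Definition closure (S : R2 -> Prop) (p : R2) : Prop :=
  forall r, 0 < r -> exists q, S q /\ dist2 q p < r.
Definition C1_on (U : R2 -> Prop) (f : R2 -> R) : Prop :=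
  (forall p, U p -> cont_at f p) /\
  forall j, (j < 2)%nat -> forall p, U p ->
    (exists l, derivable_pt_lim (fun h => f (shift p j h)) 0 l) /\
    cont_at (partial f j) p.
Definition C2_on (U : R2 -> Prop) (f : R2 -> R) : Prop :=
  C1_on U f /\ forall j, (j < 2)%nat -> C1_on U (partial f j).

(** * Matrices (entries indexed from 0) *)
Definition Mx := nat -> nat -> R.
Fixpoint sumR (n : nat) (f : nat -> R) : R :=
  match n with O => 0 | S m => sumR m f + f m end.
Definition mmul (n : nat) (A B : Mx) : Mx :=
  fun i j => sumR n (fun k => A i k * B k j).
Definition idm : Mx := fun i j => if Nat.eqb i j then 1 else 0.
Definition madd (A B : Mx) : Mx := fun i j => A i j + B i j.
Definition msub (A B : Mx) : Mx := fun i j => A i j - B i j.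
Definition mscal (r : R) (A : Mx) : Mx := fun i j => r * A i j.
Definition mx_eq (m n : nat) (A B : Mx) : Prop :=
  forall i j, (i < m)%nat -> (j < n)%nat -> A i j = B i j.
Definition minv (n : nat) (A : Mx) : Mx :=
  epsilon (inhabits (fun _ _ => 0))
    (fun B => mx_eq n n (mmul n B A) idm /\ mx_eq n n (mmul n A B) idm).
(** Kronecker product A (x) B, where B has size p x q *)
Definition kron (p q : nat) (A B : Mx) : Mx :=
  fun i j => A (i / p)%nat (j / q)%nat * B (i mod p)%nat (j mod q)%nat.
(** Vec: stacks the columns of a matrix with m rows *)
Definition vecm (m : nat) (A : Mx) : Mx :=
  fun k _ => A (k mod m)%nat (k / m)%nat.
(** row vector p^T (1 x 2) of a point *)
Definition rowp (p : R2) : Mx := fun _ j => coord p j.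

(** * Vector fields u = (u_0, u_1) : R2 -> R^2 *)
Definition ucol (u : nat -> R2 -> R) (p : R2) : Mx := fun i _ => u i p.
(** Jacobian: i-th row is grad u_i *)
Definition grad (u : nat -> R2 -> R) (p : R2) : Mx :=
  fun i j => partial (u i) j p.
Definition VecGrad (u : nat -> R2 -> R) (p : R2) : Mx := vecm 2 (grad u p).
Definition kdelta (i j : nat) : R := if Nat.eqb i j then 1 else 0.
Definition stress (lam mu : R) (u : nat -> R2 -> R) (p : R2) : Mx :=
  fun i j => lam * (partial (u 0%nat) 0 p + partial (u 1%nat) 1 p) * kdelta i j
             + 2 * mu * ((partial (u i) j p + partial (u j) i p) / 2).

(** * The interface curve Gamma ∩ T, parametrised by gam on [0,1] *)
Definition gdot (gam : R -> R2) (tau : R) : R2 :=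
  (Dt (fun t => fst (gam t)) tau, Dt (fun t => snd (gam t)) tau).
Definition C2_real (c : R -> R) : Prop :=
  exists a b, a < 0 /\ 1 < b /\ forall tau, a < tau < b ->
    (exists l, derivable_pt_lim c tau l) /\
    (exists l, derivable_pt_lim (Dt c) tau l) /\
    continuity_pt (Dt (Dt c)) tau.
Definition unormal (gam : R -> R2) (P : R2) : R2 :=
  let tau := epsilon (inhabits 0) (fun tau => 0 <= tau <= 1 /\ gam tau = P) in
  let v := gdot gam tau in
  let nv := sqrt (fst v ^ 2 + snd v ^ 2) in
  (snd v / nv, - fst v / nv).

Definition Nmat (lam mu : R) (n : R2) : Mx :=
  let n1 := fst n in let n2 := snd n in
  fun i j =>
    match i, j with
    | 0, 0 => (lam + 2 * mu) * n1 | 0, 1 => mu * n2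
    | 0, 2 => mu * n2 | 0, 3 => lam * n1
    | 1, 0 => lam * n2 | 1, 1 => mu * n1
    | 1, 2 => mu * n1 | 1, 3 => (lam + 2 * mu) * n2
    | 2, 0 => - n2 | 2, 2 => n1
    | 3, 1 => - n2 | 3, 3 => n1
    | _, _ => 0
    end.
Definition Mmat (lam mu : sgn -> R) (s : sgn) (n : R2) : Mx :=
  mmul 4 (minv 4 (Nmat (lam (opp s)) (mu (opp s)) n)) (Nmat (lam s) (mu s) n).

Inductive elem := Tri (a b c : R2) | Rect (x0 x1 y0 y1 : R).
Inductive fespace := LinearFE | BilinearFE | RotQ1FE.
Definition cross (u v : R2) : R := fst u * snd v - snd u * fst v.
Definition valid_elem (e : elem) : Prop :=
  match e with
  | Tri a b c => cross (psub b a) (psub c a) <> 0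
  | Rect x0 x1 y0 y1 => x0 < x1 /\ y0 < y1
  end.
Definition inT (e : elem) (P : R2) : Prop :=
  match e with
  | Tri a b c => exists l1 l2 l3, 0 <= l1 /\ 0 <= l2 /\ 0 <= l3 /\
      l1 + l2 + l3 = 1 /\
      P = padd (pscal l1 a) (padd (pscal l2 b) (pscal l3 c))
  | Rect x0 x1 y0 y1 => x0 <= fst P <= x1 /\ y0 <= snd P <= y1
  end.
Definition interior (S : R2 -> Prop) (P : R2) : Prop :=
  exists r, 0 < r /\ forall q, dist2 q P < r -> S q.
Definition vertices (e : elem) : list R2 :=
  match e with
  | Tri a b c => a :: b :: c :: nil
  | Rect x0 x1 y0 y1 => (x0, y0) :: (x1, y0) :: (x1, y1) :: (x0, y1) :: nil
  end.
Definition edges (e : elem) : list (R2 * R2) :=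
  match e with
  | Tri a b c => (a, b) :: (b, c) :: (c, a) :: nil
  | Rect x0 x1 y0 y1 =>
      ((x0, y0), (x1, y0)) :: ((x1, y0), (x1, y1)) ::
      ((x1, y1), (x0, y1)) :: ((x0, y1), (x0, y0)) :: nil
  end.
Definition onseg (P : R2) (ed : R2 * R2) : Prop :=
  exists t, 0 <= t <= 1 /\ P = padd (fst ed) (pscal t (psub (snd ed) (fst ed))).
Definition midpoint (ed : R2 * R2) : R2 := pscal (1/2) (padd (fst ed) (snd ed)).
Definition nodes (f : fespace) (e : elem) : list R2 :=
  match f, e with
  | LinearFE, Tri _ _ _ => vertices e
  | BilinearFE, Rect _ _ _ _ => vertices e
  | RotQ1FE, Rect _ _ _ _ => map midpoint (edges e)
  | _, _ => nil
  end.

Definition Tsub (e : elem) (Om : sgn -> R2 -> Prop) (s : sgn) (P : R2) : Prop :=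
  inT e P /\ Om s P.

Definition Tint (e : elem) (gam : R -> R2) (P : R2) : Prop :=
  inT e P /\ exists tau r, 0 <= tau <= 1 /\
    P = padd (gam tau) (pscal r (gdot gam tau)).

Definition side (D E P : R2) : R := cross (psub E D) (psub P D).
Definition Tbar (e : elem) (D E : R2) (sg : R) (P : R2) : Prop :=
  inT e P /\ 0 <= sg * side D E P.

Definition Tstar (e : elem) (Om : sgn -> R2 -> Prop) (gam : R -> R2)
    (D E : R2) (sg : R) (s : sgn) (X : R2) : Prop :=
  Tbar e D E sg X /\ Tsub e Om s X /\ ~ Tint e gam X.

Definition Yseg (A X : R2) (t : R) : R2 := padd (pscal t A) (pscal (1 - t) X).

Definition interface_element (e : elem) (Om : sgn -> R2 -> Prop)
    (Gam : R2 -> Prop) (gam : R -> R2) (D E : R2) : Prop :=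
  valid_elem e /\
  open_set (Om Plus) /\ open_set (Om Minus) /\
  (forall P, ~ (Om Plus P /\ Om Minus P)) /\
  (forall s P, Gam P -> ~ Om s P) /\
  (forall P, inT e P -> Om Plus P \/ Om Minus P \/ Gam P) /\
  (forall P, (Gam P /\ inT e P) <-> exists tau, 0 <= tau <= 1 /\ gam tau = P) /\
  (exists tau, 0 <= tau <= 1 /\ interior (inT e) (gam tau)) /\
  gam 0 = D /\ gam 1 = E /\
  (exists k1 k2, k1 <> k2 /\ (k1 < length (edges e))%nat /\
     (k2 < length (edges e))%nat /\
     onseg D (nth k1 (edges e) (D, D)) /\ onseg E (nth k2 (edges e) (E, E))) /\
  C2_real (fun t => fst (gam t)) /\ C2_real (fun t => snd (gam t)) /\
  (forall tau, 0 <= tau <= 1 -> gdot gam tau <> (0, 0)) /\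
  (forall t1 t2, 0 <= t1 <= 1 -> 0 <= t2 <= 1 -> gam t1 = gam t2 -> t1 = t2).

(** Labelling: Tbar^s (sign sg of the side of line DE) is the part of T
    approximating T^s: vertices of T in T^s lie on its side, those in T^{s'}
    on the other side. *)
Definition labelling (e : elem) (Om : sgn -> R2 -> Prop) (D E : R2)
    (s : sgn) (sg : R) : Prop :=
  (sg = 1 \/ sg = -1) /\
  (forall v, In v (vertices e) -> Om s v -> 0 <= sg * side D E v) /\
  (forall v, In v (vertices e) -> Om (opp s) v -> sg * side D E v <= 0).

(** PC^2_int(T): u s k is the k-th component of u^s, C^2 up to the closure
    of T^s (i.e. C^2 on an open neighbourhood of closure(T^s)), with
    continuity and traction continuity across Gamma ∩ T. *)
Definition PC2_int (e : elem) (Om : sgn -> R2 -> Prop) (Gam : R2 -> Prop)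
    (gam : R -> R2) (lam mu : sgn -> R) (u : sgn -> nat -> R2 -> R) : Prop :=
  (forall s, exists U, open_set U /\
     (forall p, closure (Tsub e Om s) p -> U p) /\
     forall k, (k < 2)%nat -> C2_on U (u s k)) /\
  (forall P, Gam P -> inT e P -> forall k, (k < 2)%nat ->
     u Plus k P = u Minus k P) /\
  (forall P, Gam P -> inT e P ->
     mx_eq 2 1
       (mmul 2 (stress (lam Plus) (mu Plus) (u Plus) P)
               (fun j _ => coord (unormal gam P) j))
       (mmul 2 (stress (lam Minus) (mu Minus) (u Minus) P)
               (fun j _ => coord (unormal gam P) j))).

From Pilot Require Import Defs.
From Stdlib Require Import Reals List Lra Lia ClassicalEpsilon Classical.
From Coquelicot Require Import Coquelicot.
Import Pilot.Defs.
Open Scope R_scope.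

(* Along the segment t |-> Y_i(t, X) the field is u^s before the crossing time t~_i and
   u^{s'} after it, by connectedness of the two open subdomains.  Integrating (1 - t) g''
   by parts on both pieces, with g = u(Y_i(., X)), expresses u^{s'}(A_i) - u^s(X) - g'(0)
   through R_{i1}, R_{i2} and the jump (1 - t~_i) (g'(t~_i+) - g'(t~_i-)) of the directional
   derivative.  Continuity of u across Gamma makes the tangential derivatives agree, and
   together with continuity of the traction this gives N^{s'} Vec(grad u^{s'}) =
   N^s Vec(grad u^s), i.e. Vec(grad u^{s'}) = M^s Vec(grad u^s) at Y~_i.  It remains to write
   Vec(grad u^s)(Y~_i) = Vec(grad u^s)(X) + int_0^{t~_i} d/dt Vec(grad u^s) and
   A_i - Y~_i = (1 - t~_i) (A_i - X). *)

Lemma Dt_unique g t l : derivable_pt_lim g t l -> Dt g t = l.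
Proof.
  intros H. unfold Dt.
  apply (uniqueness_limite g t); [|exact H].
  exact (epsilon_spec (inhabits 0) (fun l => derivable_pt_lim g t l) (ex_intro _ l H)).
Qed.

Lemma derivable_pt_lim_shift g x0 l :
  derivable_pt_lim (fun h => g (x0 + h)) 0 l -> derivable_pt_lim g x0 l.
Proof.
  intros H eps Heps. destruct (H eps Heps) as [d Hd]. exists d. intros h Hh Hh2.
  specialize (Hd h Hh Hh2). rewrite Rplus_0_l, Rplus_0_r in Hd. exact Hd.
Qed.

Lemma derivable_pt_lim_locally_ext (g h : R -> R) x de l : 0 < de ->
  (forall t, Rabs (t - x) < de -> h t = g t) ->
  derivable_pt_lim g x l -> derivable_pt_lim h x l.
Proof.
  intros Hde Heq Hg. apply is_derive_Reals. apply is_derive_Reals in Hg.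
  apply (is_derive_ext_loc g h); auto.
  exists (mkposreal de Hde). intros t Ht. symmetry. apply Heq. exact Ht.
Qed.

Lemma continuity_pt_locally_ext (g h : R -> R) x de : 0 < de ->
  (forall t, Rabs (t - x) < de -> h t = g t) ->
  continuity_pt g x -> continuity_pt h x.
Proof.
  intros Hde Heq Hc eps Heps. destruct (Hc eps Heps) as [d [Hd Hq]].
  exists (Rmin d de). split; [apply Rmin_pos; auto|].
  intros t [Hx Ht]. simpl in *. unfold R_dist in *.
  pose proof (Rmin_l d de). pose proof (Rmin_r d de).
  rewrite (Heq t), (Heq x) by (try rewrite Rminus_diag, Rabs_R0; lra).
  apply Hq. split; [exact Hx|]. lra.
Qed.

Lemma Rint_derive (F dF : R -> R) a b : a <= b ->
  (forall x, a <= x <= b -> derivable_pt_lim F x (dF x)) ->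
  (forall x, a <= x <= b -> continuity_pt dF x) ->
  Rint dF a b = F b - F a.
Proof.
  intros Hab Hd Hc.
  assert (H : is_RInt dF a b (F b - F a)).
  { apply (is_RInt_derive (V := R_CompleteNormedModule) F dF).
    - intros x Hx. rewrite Rmin_left, Rmax_right in Hx by lra. apply is_derive_Reals. auto.
    - intros x Hx. rewrite Rmin_left, Rmax_right in Hx by lra.
      apply continuity_pt_filterlim. auto. }
  assert (pr : Riemann_integrable dF a b) by (apply ex_RInt_Reals_0; eexists; eauto).
  unfold Rint.
  destruct (epsilon_spec (inhabits 0)
     (fun l => exists pr : Riemann_integrable dF a b, RiemannInt pr = l)
     (ex_intro _ _ (ex_intro _ pr eq_refl))) as [pr' <-].
  rewrite <- RInt_Reals. apply is_RInt_unique. exact H.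
Qed.

Lemma Rint_Dt g a b : a <= b ->
  (forall x, a <= x <= b -> derivable_pt_lim g x (Dt g x)) ->
  (forall x, a <= x <= b -> continuity_pt (Dt g) x) ->
  Rint (Dt g) a b = g b - g a.
Proof. apply Rint_derive. Qed.

(* (1 - t) g'' is the derivative of (1 - t) g' + g. *)
Lemma Rint_Taylor g a b : a <= b ->
  (forall x, a <= x <= b -> derivable_pt_lim g x (Dt g x)) ->
  (forall x, a <= x <= b -> derivable_pt_lim (Dt g) x (Dt (Dt g) x)) ->
  (forall x, a <= x <= b -> continuity_pt (Dt (Dt g)) x) ->
  Rint (fun t => (1 - t) * Dt (Dt g) t) a b =
  ((1 - b) * Dt g b + g b) - ((1 - a) * Dt g a + g a).
Proof.
  intros Hab Hg Hg' Hc.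
  apply (Rint_derive (fun t => (1 - t) * Dt g t + g t)); auto.
  - intros x Hx.
    replace ((1 - x) * Dt (Dt g) x) with (-1 * Dt g x + (1 - x) * Dt (Dt g) x + Dt g x) by ring.
    apply derivable_pt_lim_plus; [apply derivable_pt_lim_mult|]; auto.
    apply is_derive_Reals. auto_derive; [exact I | ring].
  - intros x Hx. apply (continuity_pt_mult (fun t => 1 - t)); auto.
    apply derivable_continuous_pt. exists (-1).
    apply is_derive_Reals. auto_derive; [exact I | ring].
Qed.

Lemma dist2_refl p : dist2 p p = 0.
Proof.
  unfold dist2. replace ((fst p - fst p) ^ 2 + (snd p - snd p) ^ 2) with 0 by ring.
  apply sqrt_0.
Qed.

Lemma dist2_lt p q d : 0 < d ->
  Rabs (fst q - fst p) < d / 2 -> Rabs (snd q - snd p) < d / 2 -> dist2 q p < d.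
Proof.
  intros Hd H1 H2. unfold dist2.
  rewrite <- (sqrt_pow2 d) by lra.
  apply sqrt_lt_1_alt. split.
  - apply Rplus_le_le_0_compat; apply pow2_ge_0.
  - apply Rabs_def2 in H1. apply Rabs_def2 in H2. simpl. nra.
Qed.

Lemma Yseg_0 A X : Yseg A X 0 = X.
Proof. destruct X; unfold Yseg, padd, pscal; simpl; f_equal; ring. Qed.

Lemma Yseg_1 A X : Yseg A X 1 = A.
Proof. destruct A; unfold Yseg, padd, pscal; simpl; f_equal; ring. Qed.

Lemma Yseg_swap A X t : Yseg X A t = Yseg A X (1 - t).
Proof. unfold Yseg, padd, pscal; simpl; f_equal; ring. Qed.

Lemma Yseg_near A X t0 r : 0 < r -> exists de, 0 < de /\
  forall t, Rabs (t - t0) < de -> dist2 (Yseg A X t) (Yseg A X t0) < r.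
Proof.
  intros Hr. set (K := Rabs (fst A - fst X) + Rabs (snd A - snd X) + 1).
  pose proof (Rabs_pos (fst A - fst X)). pose proof (Rabs_pos (snd A - snd X)).
  assert (HK : 0 < K) by (unfold K; lra).
  exists (r / 2 / K). split; [apply Rdiv_lt_0_compat; lra|].
  intros t Ht. pose proof (Rabs_pos (t - t0)).
  assert (Htk : Rabs (t - t0) * K < r / 2).
  { apply (Rmult_lt_compat_r K) in Ht; auto. field_simplify in Ht; lra. }
  apply dist2_lt; auto; unfold Yseg, padd, pscal; simpl.
  - replace (t * fst A + (1 - t) * fst X - (t0 * fst A + (1 - t0) * fst X))
      with ((t - t0) * (fst A - fst X)) by ring.
    rewrite Rabs_mult. assert (Rabs (fst A - fst X) < K) by (unfold K; lra). nra.
  - replace (t * snd A + (1 - t) * snd X - (t0 * snd A + (1 - t0) * snd X))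
      with ((t - t0) * (snd A - snd X)) by ring.
    rewrite Rabs_mult. assert (Rabs (snd A - snd X) < K) by (unfold K; lra). nra.
Qed.

Lemma Yseg_open (U : R2 -> Prop) A X t0 : open_set U -> U (Yseg A X t0) ->
  exists de, 0 < de /\ forall t, Rabs (t - t0) < de -> U (Yseg A X t).
Proof.
  intros HU Hp. destruct (HU _ Hp) as [r [Hr Hq]].
  destruct (Yseg_near A X t0 r Hr) as [de [Hde H]]. eauto.
Qed.

Lemma continuity_pt_comp_Yseg (h : R2 -> R) A X t0 : cont_at h (Yseg A X t0) ->
  continuity_pt (fun t => h (Yseg A X t)) t0.
Proof.
  intros Hc eps Heps. destruct (Hc eps Heps) as [d [Hd Hq]].
  destruct (Yseg_near A X t0 d Hd) as [de [Hde H]].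
  exists de. split; auto. intros t [_ Ht]. apply Hq, H, Ht.
Qed.

Lemma closure_Yseg (S : R2 -> Prop) P Q a b : a < b ->
  (forall t, a <= t < b -> S (Yseg P Q t)) ->
  forall t, a <= t <= b -> closure S (Yseg P Q t).
Proof.
  intros Hab HS t Ht r Hr.
  destruct (Rlt_le_dec t b).
  - exists (Yseg P Q t). split; [apply HS; lra | rewrite dist2_refl; lra].
  - destruct (Yseg_near P Q t r Hr) as [de [Hde Hc]].
    set (h := Rmin de (b - a) / 2).
    assert (0 < Rmin de (b - a)) by (apply Rmin_pos; lra).
    pose proof (Rmin_l de (b - a)). pose proof (Rmin_r de (b - a)).
    exists (Yseg P Q (t - h)). split.
    + apply HS. unfold h. lra.
    + apply Hc. unfold h. apply Rabs_def1; lra.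
Qed.

Lemma inT_Yseg e A X t : inT e A -> inT e X -> 0 <= t <= 1 -> inT e (Yseg A X t).
Proof.
  intros HA HX Ht. destruct e as [a b c | x0 x1 y0 y1]; simpl in *.
  - destruct HA as [l1 [l2 [l3 [? [? [? [? ->]]]]]]].
    destruct HX as [m1 [m2 [m3 [? [? [? [? ->]]]]]]].
    exists (t * l1 + (1 - t) * m1), (t * l2 + (1 - t) * m2), (t * l3 + (1 - t) * m3).
    repeat split; try nra.
    unfold Yseg, padd, pscal; simpl; f_equal; ring.
  - unfold Yseg, padd, pscal; simpl. nra.
Qed.

Definition dirder (h : R2 -> R) (d p : R2) : R :=
  partial h 0 p * fst d + partial h 1 p * snd d.

Definition dirder2 (h : R2 -> R) (d p : R2) : R :=
  dirder (partial h 0) d p * fst d + dirder (partial h 1) d p * snd d.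

Lemma ball_dist2 (p : R2) (r : posreal) (q : R2) :
  ball (fst p, snd p) (r / 2) q -> dist2 (fst q, snd q) p < r.
Proof.
  intros [H1 H2]. apply dist2_lt; [apply cond_pos| |]; exact H1 || exact H2.
Qed.

Lemma open_set_locally (U : R2 -> Prop) p : open_set U -> U p ->
  locally (fst p, snd p) (fun q : R2 => U (fst q, snd q)).
Proof.
  intros HU Hp. destruct (HU p Hp) as [r [Hr Hq]].
  exists (mkposreal (r / 2) ltac:(lra)). intros q Hb. apply Hq.
  apply (ball_dist2 p (mkposreal r Hr)). exact Hb.
Qed.

Lemma cont_at_continuous (g : R2 -> R) p : cont_at g p ->
  continuous (fun q : R2 => g (fst q, snd q)) (fst p, snd p).
Proof.
  intros Hc. apply filterlim_locally. intros eps.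
  destruct (Hc eps (cond_pos eps)) as [d [Hd Hq]].
  exists (mkposreal (d / 2) ltac:(lra)). intros q Hb.
  destruct p. apply Hq, (ball_dist2 _ (mkposreal d Hd)), Hb.
Qed.

Lemma C1_differentiable (U : R2 -> Prop) f p : open_set U -> C1_on U f -> U p ->
  differentiable_pt_lim (fun a b => f (a, b)) (fst p) (snd p) (partial f 0 p) (partial f 1 p).
Proof.
  intros HU [_ Hd] Hp.
  assert (Hpartial : forall j q, (j < 2)%nat -> U q ->
    derivable_pt_lim (fun h => f (shift q j h)) 0 (partial f j q)).
  { intros j q Hj Hq. destruct (Hd j Hj q Hq) as [[l Hl] _].
    unfold partial. rewrite (Dt_unique _ _ _ Hl). exact Hl. }
  apply filterdiff_differentiable_pt_lim.
  eapply filterdiff_ext_lin.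
  - apply (is_derive_filterdiff (fun a b => f (a, b)) (fst p) (snd p)
      (fun a b => partial f 0 (a, b)) (partial f 1 p)).
    + generalize (open_set_locally U p HU Hp). apply filter_imp.
      intros [a b] Hab. apply is_derive_Reals, derivable_pt_lim_shift.
      exact (Hpartial 0%nat (a, b) ltac:(lia) Hab).
    + apply is_derive_Reals, derivable_pt_lim_shift.
      destruct p. exact (Hpartial 1%nat _ ltac:(lia) Hp).
    + apply (cont_at_continuous (partial f 0) p), (Hd 0%nat ltac:(lia) p Hp).
  - intros [a b]. destruct p. simpl. unfold plus, scal; simpl. unfold mult; simpl. ring.
Qed.

Lemma derive_comp_Yseg (U : R2 -> Prop) h A X t :
  open_set U -> C1_on U h -> U (Yseg A X t) ->
  derivable_pt_lim (fun t => h (Yseg A X t)) t (dirder h (psub A X) (Yseg A X t)).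
Proof.
  intros HU Hh Hp.
  assert (Hlin : forall a b, derivable_pt_lim (fun t => t * a + (1 - t) * b) t (a - b)).
  { intros a b. apply is_derive_Reals. auto_derive; [exact I | ring]. }
  exact (derivable_pt_lim_comp_2d (fun a b => h (a, b)) (fun t => t * fst A + (1 - t) * fst X)
     (fun t => t * snd A + (1 - t) * snd X) t _ _ _ _
     (C1_differentiable U h _ HU Hh Hp) (Hlin _ _) (Hlin _ _)).
Qed.

Lemma Dt_comp_Yseg (U : R2 -> Prop) h A X t :
  open_set U -> C1_on U h -> U (Yseg A X t) ->
  Dt (fun t => h (Yseg A X t)) t = dirder h (psub A X) (Yseg A X t).
Proof. intros. apply Dt_unique. apply (derive_comp_Yseg U); auto. Qed.

Lemma Dt_comp_Yseg_near (U : R2 -> Prop) h A X t0 :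
  open_set U -> C1_on U h -> U (Yseg A X t0) ->
  exists de, 0 < de /\ forall t, Rabs (t - t0) < de ->
    Dt (fun t => h (Yseg A X t)) t = dirder h (psub A X) (Yseg A X t).
Proof.
  intros HU Hh Hp. destruct (Yseg_open U A X t0 HU Hp) as [de [Hde Hn]].
  exists de. split; auto. intros t Ht. apply (Dt_comp_Yseg U); auto.
Qed.

Lemma continuity_pt_lincomb f g a b x : continuity_pt f x -> continuity_pt g x ->
  continuity_pt (fun t => f t * a + g t * b) x.
Proof.
  intros Hf Hg.
  apply (continuity_pt_plus (fun t => f t * a) (fun t => g t * b));
  apply (continuity_pt_mult _ (fun _ => _)); auto;
  apply continuity_pt_const; intros ? ?; reflexivity.
Qed.

Lemma continuity_dirder_comp_Yseg (U : R2 -> Prop) h d A X t0 :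
  C1_on U h -> U (Yseg A X t0) ->
  continuity_pt (fun t => dirder h d (Yseg A X t)) t0.
Proof.
  intros [_ Hd] Hp. unfold dirder.
  apply continuity_pt_lincomb; apply continuity_pt_comp_Yseg, Hd; auto.
Qed.

Lemma continuity_Dt_comp_Yseg (U : R2 -> Prop) h A X t0 :
  open_set U -> C1_on U h -> U (Yseg A X t0) ->
  continuity_pt (Dt (fun t => h (Yseg A X t))) t0.
Proof.
  intros HU Hh Hp. destruct (Dt_comp_Yseg_near U h A X t0 HU Hh Hp) as [de [Hde Heq]].
  apply (continuity_pt_locally_ext _ _ t0 de Hde Heq).
  apply (continuity_dirder_comp_Yseg U); auto.
Qed.

Lemma derive_Dt_comp_Yseg (U : R2 -> Prop) h A X t :
  open_set U -> C2_on U h -> U (Yseg A X t) ->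
  derivable_pt_lim (Dt (fun t => h (Yseg A X t))) t (dirder2 h (psub A X) (Yseg A X t)).
Proof.
  intros HU [Hh H2] Hp. destruct (Dt_comp_Yseg_near U h A X t HU Hh Hp) as [de [Hde Heq]].
  apply (derivable_pt_lim_locally_ext _ _ t de _ Hde Heq).
  unfold dirder, dirder2.
  apply derivable_pt_lim_plus; apply derivable_pt_lim_scal_right;
  apply (derive_comp_Yseg U); auto; apply H2; lia.
Qed.

Lemma continuity_Dt2_comp_Yseg (U : R2 -> Prop) h A X t0 :
  open_set U -> C2_on U h -> U (Yseg A X t0) ->
  continuity_pt (Dt (Dt (fun t => h (Yseg A X t)))) t0.
Proof.
  intros HU Hh Hp. destruct (Yseg_open U A X t0 HU Hp) as [de [Hde Hn]].
  apply (continuity_pt_locally_ext (fun t => dirder2 h (psub A X) (Yseg A X t)) _ t0 de Hde).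
  - intros t Ht. apply Dt_unique, (derive_Dt_comp_Yseg U); auto.
  - destruct Hh as [_ H2]. unfold dirder2.
    apply continuity_pt_lincomb; apply (continuity_dirder_comp_Yseg U); auto; apply H2; lia.
Qed.

Lemma Rint_Taylor_comp_Yseg (U : R2 -> Prop) h A X a b :
  open_set U -> C2_on U h -> a <= b -> (forall t, a <= t <= b -> U (Yseg A X t)) ->
  Rint (fun t => (1 - t) * Dt (Dt (fun t' => h (Yseg A X t'))) t) a b =
  ((1 - b) * dirder h (psub A X) (Yseg A X b) + h (Yseg A X b)) -
  ((1 - a) * dirder h (psub A X) (Yseg A X a) + h (Yseg A X a)).
Proof.
  intros HU Hh Hab HY. pose proof (proj1 Hh) as Hh1.
  rewrite Rint_Taylor; [| exact Hab | intros x Hx .. ].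
  - rewrite !(Dt_comp_Yseg U) by (auto; apply HY; lra). reflexivity.
  - rewrite (Dt_comp_Yseg U) by auto. apply (derive_comp_Yseg U); auto.
  - rewrite (Dt_unique _ _ _ (derive_Dt_comp_Yseg U h A X x HU Hh (HY x Hx))).
    apply (derive_Dt_comp_Yseg U); auto.
  - apply (continuity_Dt2_comp_Yseg U); auto.
Qed.

Lemma Rint_Dt_comp_Yseg (U : R2 -> Prop) h A X a b :
  open_set U -> C1_on U h -> a <= b -> (forall t, a <= t <= b -> U (Yseg A X t)) ->
  Rint (Dt (fun t => h (Yseg A X t))) a b = h (Yseg A X b) - h (Yseg A X a).
Proof.
  intros HU Hh Hab HY. apply Rint_Dt; auto; intros x Hx.
  - rewrite (Dt_comp_Yseg U) by auto. apply (derive_comp_Yseg U); auto.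
  - apply (continuity_Dt_comp_Yseg U); auto.
Qed.

(* Real induction along [0, c]: the supremum of the times up to which Z stays in O1 cannot
   lie in O2 (O2 is open) and cannot be < c (O1 is open). *)
Lemma path_in_open (O1 O2 : R2 -> Prop) (Z : R -> R2) c :
  open_set O1 -> open_set O2 -> (forall P, ~ (O1 P /\ O2 P)) ->
  (forall t0 r, 0 < r -> exists de, 0 < de /\
     forall t, Rabs (t - t0) < de -> dist2 (Z t) (Z t0) < r) ->
  (forall t, 0 <= t <= c -> O1 (Z t) \/ O2 (Z t)) -> O1 (Z 0) ->
  forall t, 0 <= t <= c -> O1 (Z t).
Proof.
  intros H1 H2 Hdis HZ Hcov H0 t1 Ht1.
  set (S := fun t => 0 <= t <= c /\ forall t', 0 <= t' <= t -> O1 (Z t')).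
  assert (HS0 : S 0) by (split; [lra|]; intros t' Ht'; replace t' with 0 by lra; exact H0).
  destruct (completeness S) as [m [Hub Hlub]]; [exists c; intros x [Hx _]; lra | eauto |].
  pose proof (Hub 0 HS0) as Hm0.
  assert (Hmc : m <= c) by (apply Hlub; intros x [Hx _]; lra).
  assert (Hbelow : forall t, 0 <= t < m -> O1 (Z t)).
  { intros t Ht. destruct (classic (exists t', S t' /\ t <= t')) as [[t' [[_ Ht'] Hle]] | Hn].
    - apply Ht'. lra.
    - exfalso. assert (m <= t); [|lra].
      apply Hlub. intros x Hx. destruct (Rle_lt_dec x t) as [|Hlt]; auto.
      exfalso. apply Hn. exists x. split; auto; lra. }
  assert (HZm : O1 (Z m)).
  { destruct (Hcov m ltac:(lra)) as [|Hm]; auto. exfalso.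
    destruct (H2 _ Hm) as [r [Hr Hq]]. destruct (HZ m r Hr) as [de [Hde Hz]].
    destruct (Req_dec m 0) as [->|Hm00]; [apply (Hdis (Z 0)); auto|].
    set (t' := Rmax 0 (m - de / 2)).
    assert (0 <= t' < m) by (unfold t'; apply Rmax_case_strong; intros; lra).
    assert (Rabs (t' - m) < de)
      by (unfold t'; apply Rmax_case_strong; intros; apply Rabs_def1; lra).
    apply (Hdis (Z t')). split; [apply Hbelow; auto | apply Hq, Hz; auto]. }
  assert (Hmceq : m = c).
  { destruct (Rle_lt_or_eq_dec _ _ Hmc) as [Hlt|]; auto. exfalso.
    destruct (H1 _ HZm) as [r [Hr Hq]]. destruct (HZ m r Hr) as [de [Hde Hz]].
    set (t'' := Rmin c (m + de / 2)).
    assert (m < t'' <= c) by (unfold t''; apply Rmin_case_strong; intros; lra).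
    assert (S t''); [|assert (t'' <= m) by (apply Hub; auto); lra].
    split; [lra|]. intros t' Ht'. destruct (Rlt_le_dec t' m); [apply Hbelow; lra|].
    apply Hq, Hz, Rabs_def1; unfold t'' in *; revert Ht'; apply Rmin_case_strong; intros; lra. }
  destruct (Rlt_le_dec t1 m); [apply Hbelow; lra|]. replace t1 with m by lra. exact HZm.
Qed.

Section Crossing.
Variables (e : elem) (O1 O2 Gm : R2 -> Prop) (A X : R2) (tt : R).
Hypotheses (HO1 : open_set O1) (HO2 : open_set O2) (Hdis : forall P, ~ (O1 P /\ O2 P))
  (HG1 : forall P, Gm P -> ~ O1 P) (HG2 : forall P, Gm P -> ~ O2 P)
  (Hcov : forall P, inT e P -> O1 P \/ O2 P \/ Gm P)
  (HA : inT e A) (HA2 : O2 A) (HX : inT e X) (HX1 : O1 X)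
  (Htt : 0 <= tt <= 1) (HGt : Gm (Yseg A X tt))
  (Huniq : forall t, 0 <= t <= 1 -> Gm (Yseg A X t) -> inT e (Yseg A X t) -> t = tt).

Lemma crossing_time_interior : 0 < tt < 1.
Proof.
  split.
  - destruct (Req_dec tt 0) as [E|E]; [|lra]. rewrite E, Yseg_0 in HGt. now destruct (HG1 X).
  - destruct (Req_dec tt 1) as [E|E]; [|lra]. rewrite E, Yseg_1 in HGt. now destruct (HG2 A).
Qed.

Lemma segment_before_crossing t : 0 <= t < tt -> O1 (Yseg A X t).
Proof.
  intros Ht. apply (path_in_open O1 O2 (Yseg A X) t); auto; try lra.
  - intros t0 r Hr. apply Yseg_near; auto.
  - intros t' Ht'. assert (Hin : inT e (Yseg A X t')) by (apply inT_Yseg; auto; lra).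
    destruct (Hcov _ Hin) as [|[|Hg]]; auto.
    assert (t' = tt) by (apply Huniq; auto; lra). lra.
  - rewrite Yseg_0. exact HX1.
Qed.

Lemma segment_after_crossing t : tt < t <= 1 -> O2 (Yseg A X t).
Proof.
  intros Ht. replace t with (1 - (1 - t)) by ring. rewrite <- Yseg_swap.
  apply (path_in_open O2 O1 (Yseg X A) (1 - t)); auto; try lra.
  - intros P [? ?]. apply (Hdis P); auto.
  - intros t0 r Hr. apply Yseg_near; auto.
  - intros t' Ht'. rewrite Yseg_swap.
    assert (Hin : inT e (Yseg A X (1 - t'))) by (apply inT_Yseg; auto; lra).
    destruct (Hcov _ Hin) as [|[|Hg]]; auto.
    assert (1 - t' = tt) by (apply Huniq; auto; lra). lra.
  - rewrite Yseg_0. exact HA2.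
Qed.

End Crossing.

Lemma interface_element_sides e Om Gam gam D E s :
  interface_element e Om Gam gam D E ->
  open_set (Om s) /\ open_set (Om (opp s)) /\ (forall P, ~ (Om s P /\ Om (opp s) P)) /\
  (forall P, Gam P -> ~ Om s P) /\ (forall P, Gam P -> ~ Om (opp s) P) /\
  (forall P, inT e P -> Om s P \/ Om (opp s) P \/ Gam P).
Proof.
  intros [_ [HOp [HOm [Hdis [HGam [Hcov _]]]]]].
  destruct s; simpl; repeat split; auto; try (intros P HP; destruct (Hcov P HP); tauto);
  intros P [? ?]; apply (Hdis P); auto.
Qed.

Lemma segment_in_C2_domains e Om Gam gam D E lam mu u s A X tt :
  interface_element e Om Gam gam D E -> PC2_int e Om Gam gam lam mu u ->
  Tsub e Om (opp s) A -> Tsub e Om s X -> 0 <= tt <= 1 -> Gam (Yseg A X tt) ->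
  (forall t, 0 <= t <= 1 -> Gam (Yseg A X t) -> inT e (Yseg A X t) -> t = tt) ->
  exists Us Uo, open_set Us /\ open_set Uo /\
    (forall k, (k < 2)%nat -> C2_on Us (u s k) /\ C2_on Uo (u (opp s) k)) /\
    (forall t, 0 <= t <= tt -> Us (Yseg A X t)) /\
    (forall t, tt <= t <= 1 -> Uo (Yseg A X t)).
Proof.
  intros Hie [HU _] [HAT HAo] [HXT HXs] Htt HGt Huniq.
  destruct (interface_element_sides e Om Gam gam D E s Hie)
    as [HOs [HOo [Hdis [HG1 [HG2 Hcov]]]]].
  assert (Htb := crossing_time_interior (Om s) (Om (opp s)) Gam A X tt HG1 HG2 HAo HXs Htt HGt).
  destruct (HU s) as [Us [HUs [HclUs HC2s]]].
  destruct (HU (opp s)) as [Uo [HUo [HclUo HC2o]]].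
  exists Us, Uo. repeat split; auto; try (apply HC2s || apply HC2o; auto); intros t Ht.
  - apply HclUs, (closure_Yseg _ A X 0 tt); try lra. intros t' Ht'.
    split; [apply inT_Yseg; auto; lra|].
    apply (segment_before_crossing e (Om s) (Om (opp s)) Gam A X tt); auto; lra.
  - apply HclUo. replace t with (1 - (1 - t)) by ring. rewrite <- Yseg_swap.
    apply (closure_Yseg _ X A 0 (1 - tt)); try lra. intros t' Ht'. rewrite Yseg_swap.
    split; [apply inT_Yseg; auto; lra|].
    apply (segment_after_crossing e (Om s) (Om (opp s)) Gam A X tt); auto; lra.
Qed.

Lemma derive_eq_of_eq_on_01 g1 g2 tau l1 l2 : 0 <= tau <= 1 ->
  derivable_pt_lim g1 tau l1 -> derivable_pt_lim g2 tau l2 ->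
  (forall s, 0 <= s <= 1 -> g1 s = g2 s) -> l1 = l2.
Proof.
  intros Ht H1 H2 Heq.
  pose proof (derivable_pt_lim_minus _ _ _ _ _ H1 H2) as H.
  destruct (Req_dec (l1 - l2) 0) as [|Hne]; [lra|]. exfalso.
  assert (Hp : 0 < Rabs (l1 - l2)) by (apply Rabs_pos_lt; auto).
  destruct (H _ Hp) as [[d Hd] Hq]. simpl in Hq.
  set (m := Rmin (d / 2) (1 / 2)).
  assert (0 < m) by (unfold m; apply Rmin_pos; lra).
  assert (m <= d / 2) by apply Rmin_l. assert (m <= 1 / 2) by apply Rmin_r.
  (* step into [0, 1], where g1 - g2 vanishes *)
  set (h := if Rle_dec tau (1 / 2) then m else - m).
  assert (Hh : h <> 0 /\ Rabs h < d /\ 0 <= tau + h <= 1).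
  { unfold h. destruct (Rle_dec tau (1 / 2));
      [rewrite Rabs_pos_eq | rewrite Rabs_Ropp, Rabs_pos_eq]; repeat split; lra. }
  destruct Hh as [Hh0 [Hhd Hth]].
  specialize (Hq h Hh0 Hhd). unfold minus_fct in Hq.
  rewrite (Heq tau), (Heq (tau + h)) in Hq by lra.
  replace ((g2 (tau + h) - g2 (tau + h) - (g2 tau - g2 tau)) / h - (l1 - l2))
    with (- (l1 - l2)) in Hq by (field; lra).
  rewrite Rabs_Ropp in Hq. lra.
Qed.

Lemma C2_real_derive c tau : C2_real c -> 0 <= tau <= 1 -> derivable_pt_lim c tau (Dt c tau).
Proof.
  intros [a [b [Ha [Hb H]]]] Ht. destruct (H tau ltac:(lra)) as [[l Hl] _].
  rewrite (Dt_unique _ _ _ Hl). exact Hl.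
Qed.

Lemma derive_comp_curve (U : R2 -> Prop) f gam tau :
  open_set U -> C1_on U f -> U (gam tau) ->
  C2_real (fun t => fst (gam t)) -> C2_real (fun t => snd (gam t)) -> 0 <= tau <= 1 ->
  derivable_pt_lim (fun s => f (gam s)) tau (dirder f (gdot gam tau) (gam tau)).
Proof.
  intros HU Hf Hp Hc1 Hc2 Ht.
  pose proof (derivable_pt_lim_comp_2d (fun a b => f (a, b)) (fun t => fst (gam t))
     (fun t => snd (gam t)) tau _ _ _ _ (C1_differentiable U f _ HU Hf Hp)
     (C2_real_derive _ _ Hc1 Ht) (C2_real_derive _ _ Hc2 Ht)) as H.
  apply (derivable_pt_lim_locally_ext _ (fun s => f (gam s)) tau 1 _ ltac:(lra)) in H; [exact H|].
  intros t _. rewrite <- surjective_pairing. reflexivity.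
Qed.

Lemma dirder_tangent_eq (U1 U2 : R2 -> Prop) f1 f2 gam tau :
  open_set U1 -> open_set U2 -> C1_on U1 f1 -> C1_on U2 f2 ->
  U1 (gam tau) -> U2 (gam tau) -> 0 <= tau <= 1 ->
  C2_real (fun t => fst (gam t)) -> C2_real (fun t => snd (gam t)) ->
  (forall s, 0 <= s <= 1 -> f1 (gam s) = f2 (gam s)) ->
  dirder f1 (gdot gam tau) (gam tau) = dirder f2 (gdot gam tau) (gam tau).
Proof.
  intros HU1 HU2 Hf1 Hf2 HP1 HP2 Ht Hc1 Hc2 Heq.
  apply (derive_eq_of_eq_on_01 (fun s => f1 (gam s)) (fun s => f2 (gam s)) tau); auto.
  - apply (derive_comp_curve U1); auto.
  - apply (derive_comp_curve U2); auto.
Qed.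

Lemma dirder_pscal h c d p : dirder h (pscal c d) p = c * dirder h d p.
Proof. unfold dirder, pscal; simpl; ring. Qed.

Lemma unormal_tangent gam P :
  (exists tau, 0 <= tau <= 1 /\ gam tau = P) ->
  (forall tau, 0 <= tau <= 1 -> gdot gam tau <> (0, 0)) ->
  exists tau c, 0 <= tau <= 1 /\ gam tau = P /\ 0 < c /\ gdot gam tau <> (0, 0) /\
    (- snd (unormal gam P), fst (unormal gam P)) = pscal c (gdot gam tau).
Proof.
  intros HP Hgd.
  set (tau := epsilon (inhabits 0) (fun tau => 0 <= tau <= 1 /\ gam tau = P)).
  assert (Htau : 0 <= tau <= 1 /\ gam tau = P) by (apply epsilon_spec; exact HP).
  set (v := gdot gam tau). set (nv := sqrt (fst v ^ 2 + snd v ^ 2)).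
  assert (Hv : v <> (0, 0)) by (apply Hgd; tauto).
  assert (Hnv : 0 < nv).
  { apply sqrt_lt_R0. destruct v as [v1 v2]; simpl.
    destruct (Req_dec v1 0); destruct (Req_dec v2 0); subst; try (exfalso; auto; fail); nra. }
  exists tau, (/ nv). repeat split; try tauto; [apply Rinv_0_lt_compat; auto|].
  change (unormal gam P) with (snd v / nv, - fst v / nv).
  unfold pscal; simpl; f_equal; field; lra.
Qed.

Lemma unormal_nonzero gam P :
  (exists tau, 0 <= tau <= 1 /\ gam tau = P) ->
  (forall tau, 0 <= tau <= 1 -> gdot gam tau <> (0, 0)) ->
  fst (unormal gam P) * fst (unormal gam P) + snd (unormal gam P) * snd (unormal gam P) <> 0.
Proof.
  intros HP Hgd. destruct (unormal_tangent gam P HP Hgd) as [tau [c [_ [_ [Hc [Hv Ht]]]]]].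
  destruct (unormal gam P) as [n1 n2], (gdot gam tau) as [v1 v2].
  unfold pscal in Ht; simpl in *. injection Ht as H1 H2.
  replace (n1 * n1 + n2 * n2) with (c * c * (v1 * v1 + v2 * v2)) by (subst; nra).
  destruct (Req_dec v1 0); destruct (Req_dec v2 0); subst; try (exfalso; auto; fail);
  apply Rmult_integral_contrapositive; split; nra.
Qed.

Lemma sumR_4 f : sumR 4 f = f 0%nat + f 1%nat + f 2%nat + f 3%nat.
Proof. simpl. ring. Qed.

Lemma sumR_ext n f g : (forall q, (q < n)%nat -> f q = g q) -> sumR n f = sumR n g.
Proof.
  induction n as [|n IH]; intros H; simpl; auto.
  rewrite IH by (intros; apply H; lia). rewrite H by lia. reflexivity.
Qed.

(* Solution of [Nmat lam mu (a, b) x = y]: rotating the traction rows (0, 1) and the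
   tangential rows (2, 3) into the frame (n, n^perp) decouples the system. *)
Definition Nmat_solve (lam mu a b y0 y1 y2 y3 : R) (i : nat) : R :=
  let r := a * a + b * b in
  let c := lam + 2 * mu in
  let Tn := a * y0 + b * y1 in let Tt := - b * y0 + a * y1 in
  let Q := - b * y2 + a * y3 in let Qn := a * y2 + b * y3 in
  let P := (Tn - lam * Q) / c in let Pt := Tt / mu - Qn in
  let p0 := (a * P - b * Pt) / r in let p1 := (b * P + a * Pt) / r in
  match i with
  | 0 => (a * p0 - b * y2) / r
  | 1 => (a * p1 - b * y3) / r
  | 2 => (b * p0 + a * y2) / r
  | _ => (b * p1 + a * y3) / r
  end.

Definition Nmat_inv (lam mu : R) (n : R2) : Mx := fun i j =>
  Nmat_solve lam mu (fst n) (snd n) (kdelta j 0) (kdelta j 1) (kdelta j 2) (kdelta j 3) i.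

Lemma Nmat_invP lam mu n : 0 < mu -> lam + 2 * mu <> 0 ->
  fst n * fst n + snd n * snd n <> 0 ->
  mx_eq 4 4 (mmul 4 (Nmat_inv lam mu n) (Nmat lam mu n)) idm /\
  mx_eq 4 4 (mmul 4 (Nmat lam mu n) (Nmat_inv lam mu n)) idm.
Proof.
  intros Hmu Hc Hr. destruct n as [a b]. simpl in Hr.
  split; intros i j Hi Hj;
  (destruct i as [|[|[|[|i]]]]; [| | | | lia]);
  (destruct j as [|[|[|[|j]]]]; [| | | | lia]);
  unfold mmul, Nmat_inv, Nmat, idm, Nmat_solve, kdelta; simpl; field; lra.
Qed.

Lemma minv_Nmat_l lam mu n : 0 < mu -> lam + 2 * mu <> 0 ->
  fst n * fst n + snd n * snd n <> 0 ->
  mx_eq 4 4 (mmul 4 (minv 4 (Nmat lam mu n)) (Nmat lam mu n)) idm.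
Proof.
  intros H1 H2 H3. unfold minv.
  apply (epsilon_spec (inhabits (fun _ _ => 0))
    (fun B => mx_eq 4 4 (mmul 4 B (Nmat lam mu n)) idm /\
              mx_eq 4 4 (mmul 4 (Nmat lam mu n) B) idm)
    (ex_intro _ _ (Nmat_invP lam mu n H1 H2 H3))).
Qed.

Lemma solve_by_left_inverse (B No Ns : Mx) (wo ws : nat -> R) :
  mx_eq 4 4 (mmul 4 B No) idm ->
  (forall q, (q < 4)%nat ->
     sumR 4 (fun k => No q k * wo k) = sumR 4 (fun l => Ns q l * ws l)) ->
  forall m, (m < 4)%nat -> wo m = sumR 4 (fun l => mmul 4 B Ns m l * ws l).
Proof.
  intros HB Hrow m Hm.
  transitivity (sumR 4 (fun k => mmul 4 B No m k * wo k)).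
  - rewrite (sumR_ext 4 _ (fun k => idm m k * wo k)) by (intros; rewrite HB; auto).
    destruct m as [|[|[|[|m]]]]; try lia; unfold idm; simpl; ring.
  - transitivity (sumR 4 (fun q => B m q * sumR 4 (fun k => No q k * wo k))).
    + unfold mmul. rewrite !sumR_4. ring.
    + rewrite (sumR_ext 4 _ (fun q => B m q * sumR 4 (fun l => Ns q l * ws l)))
        by (intros; rewrite Hrow; auto).
      unfold mmul. rewrite !sumR_4. ring.
Qed.

(* Rows 0-1 of [Nmat lam mu n] applied to Vec(grad u) give the traction sigma(u) n,
   rows 2-3 the derivative of u in the tangential direction (-n2, n1). *)
Lemma Nmat_VecGrad_eq lamP muP lamM muM (uP uM : nat -> R2 -> R) P n :
  mx_eq 2 1 (mmul 2 (stress lamP muP uP P) (fun j _ => coord n j))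
            (mmul 2 (stress lamM muM uM P) (fun j _ => coord n j)) ->
  (forall k, (k < 2)%nat ->
     dirder (uP k) (- snd n, fst n) P = dirder (uM k) (- snd n, fst n) P) ->
  forall q, (q < 4)%nat ->
    sumR 4 (fun k => Nmat lamP muP n q k * VecGrad uP P k 0%nat) =
    sumR 4 (fun k => Nmat lamM muM n q k * VecGrad uM P k 0%nat).
Proof.
  intros Htr Htg q Hq. destruct n as [n1 n2].
  pose proof (Htr 0%nat 0%nat ltac:(lia) ltac:(lia)) as T0.
  pose proof (Htr 1%nat 0%nat ltac:(lia) ltac:(lia)) as T1.
  pose proof (Htg 0%nat ltac:(lia)) as G0.
  pose proof (Htg 1%nat ltac:(lia)) as G1.
  unfold mmul, stress, kdelta, coord in T0, T1. unfold dirder in G0, G1. simpl in *.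
  destruct q as [|[|[|[|q]]]]; try lia; unfold Nmat, VecGrad, vecm, grad; simpl; lra.
Qed.

Lemma PC2_int_interface e Om Gam gam lam mu u s P :
  PC2_int e Om Gam gam lam mu u -> Gam P -> inT e P ->
  (forall k, (k < 2)%nat -> u (opp s) k P = u s k P) /\
  mx_eq 2 1
    (mmul 2 (stress (lam (opp s)) (mu (opp s)) (u (opp s)) P) (fun j _ => coord (unormal gam P) j))
    (mmul 2 (stress (lam s) (mu s) (u s) P) (fun j _ => coord (unormal gam P) j)).
Proof.
  intros [_ [Hcont Htrac]] HG HT.
  destruct s; simpl; split; intros; auto.
  - symmetry. auto.
  - intros i j Hi Hj. symmetry. apply Htrac; auto.
Qed.

Lemma VecGrad_jump e Om Gam gam D E lam mu u s (Us Uo : R2 -> Prop) P :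
  (forall s0, 0 < lam s0) -> (forall s0, 0 < mu s0) ->
  interface_element e Om Gam gam D E -> PC2_int e Om Gam gam lam mu u ->
  open_set Us -> open_set Uo -> Us P -> Uo P ->
  (forall k, (k < 2)%nat -> C1_on Us (u s k) /\ C1_on Uo (u (opp s) k)) ->
  Gam P -> inT e P ->
  forall m, (m < 4)%nat ->
    VecGrad (u (opp s)) P m 0%nat =
    sumR 4 (fun l => Mmat lam mu s (unormal gam P) m l * VecGrad (u s) P l 0%nat).
Proof.
  intros Hlam Hmu Hie Hpc HUs HUo HPs HPo HC1 HG HT.
  destruct Hie as [_ [_ [_ [_ [_ [_ [Hgiff [_ [_ [_ [_ [Hc1 [Hc2 [Hgd _]]]]]]]]]]]]]].
  assert (HP : exists tau, 0 <= tau <= 1 /\ gam tau = P) by (apply Hgiff; auto).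
  destruct (unormal_tangent gam P HP Hgd) as [tau [c [Htau [<- [_ [_ Htang]]]]]].
  unfold Mmat.
  apply (solve_by_left_inverse _ (Nmat (lam (opp s)) (mu (opp s)) (unormal gam (gam tau)))).
  - pose proof (Hlam (opp s)). pose proof (Hmu (opp s)).
    apply minv_Nmat_l; auto; [lra|]. apply unormal_nonzero; eauto.
  - apply Nmat_VecGrad_eq; [apply (PC2_int_interface e Om Gam); auto|].
    intros k Hk. rewrite Htang, !dirder_pscal. f_equal.
    apply (dirder_tangent_eq Uo Us); auto; try apply HC1; auto.
    intros s1 Hs1. destruct (proj2 (Hgiff (gam s1)) (ex_intro _ s1 (conj Hs1 eq_refl))).
    apply (PC2_int_interface e Om Gam gam lam mu); auto.
Qed.

Lemma C1_on_VecGrad (U : R2 -> Prop) (u : nat -> R2 -> R) m :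
  (forall k, (k < 2)%nat -> C2_on U (u k)) -> (m < 4)%nat ->
  C1_on U (fun p => VecGrad u p m 0%nat).
Proof.
  intros H Hm.
  destruct m as [|[|[|[|m]]]]; try lia.
  - exact (proj2 (H 0%nat ltac:(lia)) 0%nat ltac:(lia)).
  - exact (proj2 (H 1%nat ltac:(lia)) 0%nat ltac:(lia)).
  - exact (proj2 (H 0%nat ltac:(lia)) 1%nat ltac:(lia)).
  - exact (proj2 (H 1%nat ltac:(lia)) 1%nat ltac:(lia)).
Qed.

Lemma kron_rowp_mmul d (w : Mx) k j : (k < 2)%nat ->
  mmul 4 (kron 2 2 (rowp d) idm) w k j = fst d * w k j + snd d * w (S (S k)) j.
Proof.
  intros Hk. destruct k as [|[|k]]; try lia; unfold mmul, kron, rowp, idm, coord; simpl; ring.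
Qed.

Lemma dirder_VecGrad (u : nat -> R2 -> R) d p k : (k < 2)%nat ->
  dirder (u k) d p = fst d * VecGrad u p k 0%nat + snd d * VecGrad u p (S (S k)) 0%nat.
Proof.
  intros Hk. destruct k as [|[|k]]; try lia; unfold dirder, VecGrad, vecm, grad; simpl; ring.
Qed.

(* With A - Y = (1 - tt) (A - X), the jump term and R3 combine into
   (1 - tt) (A - X)^T (M - I) Vec(grad u^s)(Y), the jump of the directional derivative. *)
Lemma interface_Taylor_identity (us uo : nat -> R2 -> R) (Ms W : Mx) (A X : R2)
    (tt r1 r2 : R) k j :
  (k < 2)%nat ->
  let Y := Yseg A X tt in
  let KAX := kron 2 2 (rowp (psub A X)) idm in
  let KAY := kron 2 2 (rowp (psub A Y)) idm in
  (forall m, (m < 4)%nat ->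
     VecGrad uo Y m 0%nat = sumR 4 (fun l => Ms m l * VecGrad us Y l 0%nat)) ->
  us k Y = uo k Y ->
  r1 = ((1 - tt) * dirder (us k) (psub A X) Y + us k Y) -
       ((1 - 0) * dirder (us k) (psub A X) X + us k X) ->
  r2 = ((1 - 1) * dirder (uo k) (psub A X) A + uo k A) -
       ((1 - tt) * dirder (uo k) (psub A X) Y + uo k Y) ->
  (forall m, (m < 4)%nat -> W m j = VecGrad us Y m 0%nat - VecGrad us X m 0%nat) ->
  uo k A = us k X + (mmul 4 KAX (VecGrad us X) k j +
    (mmul 4 KAY (mmul 4 (msub Ms idm) (VecGrad us X)) k j +
     (r1 + (r2 + (1 - tt) * mmul 4 KAX (mmul 4 (msub Ms idm) W) k j)))).
Proof.
  intros Hk Y KAX KAY Hjump Hcont -> -> HW.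
  unfold KAX, KAY. rewrite !kron_rowp_mmul by lia.
  rewrite !(dirder_VecGrad _ _ _ k), (Hjump k), (Hjump (S (S k))), Hcont by lia.
  unfold mmul, msub, idm. rewrite !sumR_4, !HW by lia.
  unfold Y, psub, Yseg, padd, pscal, VecGrad, vecm. simpl.
  destruct k as [|[|k]]; try lia; simpl; ring.
Qed.
Theorem mainTheorem5
  (f : fespace) (e : elem) (Om : sgn -> R2 -> Prop) (Gam : R2 -> Prop)
  (gam : R -> R2) (D E : R2) (lam mu : sgn -> R) (u : sgn -> nat -> R2 -> R)
  (s : sgn) (sg : R) (A X : R2) (tt : R) :
  (forall s0, 0 < lam s0) -> (forall s0, 0 < mu s0) ->
  interface_element e Om Gam gam D E ->
  PC2_int e Om Gam gam lam mu u ->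
  labelling e Om D E s sg ->
  (* i in I^{s'} *)
  In A (nodes f e) -> Tsub e Om (opp s) A ->
  (* X in T^s_* *)
  Tstar e Om gam D E sg s X ->
  (* Y~_i = Y_i(t~_i, X): the unique point where [X, A_i] meets Gamma ∩ T *)
  0 <= tt <= 1 ->
  Gam (Yseg A X tt) -> inT e (Yseg A X tt) ->
  (forall t, 0 <= t <= 1 -> Gam (Yseg A X t) -> inT e (Yseg A X t) -> t = tt) ->
  let Yt := Yseg A X tt in
  let Ms := Mmat lam mu s (unormal gam Yt) in
  let KAX := kron 2 2 (rowp (psub A X)) idm in
  let KAY := kron 2 2 (rowp (psub A Yt)) idm in
  let R1 := fun k (_ : nat) =>
    Rint (fun t => (1 - t) * Dt (Dt (fun t' => u s k (Yseg A X t'))) t) 0 tt in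
  let R2' := fun k (_ : nat) =>
    Rint (fun t => (1 - t) * Dt (Dt (fun t' => u (opp s) k (Yseg A X t'))) t) tt 1 in
  let W := fun k (_ : nat) =>
    Rint (fun t => Dt (fun t' => VecGrad (u s) (Yseg A X t') k 0%nat) t) 0 tt in
  let R3 := mscal (1 - tt) (mmul 4 KAX (mmul 4 (msub Ms idm) W)) in
  let Rs := madd R1 (madd R2' R3) in
  mx_eq 2 1 (ucol (u (opp s)) A)
    (madd (ucol (u s) X)
      (madd (mmul 4 KAX (VecGrad (u s) X))
        (madd (mmul 4 KAY (mmul 4 (msub Ms idm) (VecGrad (u s) X))) Rs))).
Proof.
  intros Hlam Hmu Hie Hpc _ _ HA HX Htt HGt HinT Huniq Yt Ms KAX KAY R1 R2' W R3 Rs k j Hk _.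
  destruct HX as [_ [HX _]].
  destruct (segment_in_C2_domains e Om Gam gam D E lam mu u s A X tt Hie Hpc HA HX Htt HGt Huniq)
    as [Us [Uo [HUs [HUo [HC2 [HYs HYo]]]]]].
  assert (HC1 : forall k, (k < 2)%nat -> C1_on Us (u s k) /\ C1_on Uo (u (opp s) k))
    by (intros k' Hk'; split; apply HC2; auto).
  apply (interface_Taylor_identity (u s) (u (opp s)) Ms W A X tt); auto.
  - apply (VecGrad_jump e Om Gam gam D E lam mu u s Us Uo); auto; [apply HYs | apply HYo]; lra.
  - symmetry. apply (PC2_int_interface e Om Gam gam lam mu); auto.
  - unfold R1. rewrite (Rint_Taylor_comp_Yseg Us), Yseg_0; auto; [apply HC2; auto | lra].
  - unfold R2'. rewrite (Rint_Taylor_comp_Yseg Uo), Yseg_1; auto; [apply HC2; auto | lra].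
  - intros m Hm. unfold W.
    rewrite (Rint_Dt_comp_Yseg Us (fun p => VecGrad (u s) p m 0%nat)), Yseg_0; auto; [|lra].
    apply C1_on_VecGrad; auto. intros k' Hk'. apply HC2; auto.
Qed.
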